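(* Let $b\ge 2$. For every positive integer $N$ there exist infinitely many positive integers $M$ such that $N\cdot M$ is a $b$-wMRH number. In particular every positive integer divides some $b$-wMRH number.
   Context: Fix a base $b\ge 2$. $s_b(N)$ is the sum of the base-$b$ digits of $N$. For a positive integer $X$, its reversal $X^R$ is the integer whose base-$b$ representation is that of $X$ written in reverse order (leading zeros of the result are dropped). A positive integer $N$ is a $b$-wMRH number if there exists an integer $A\ge 0$ such that $N=(A+s_b(N))\cdot(A+s_b(N))^R$. *)

From mathcomp Require Import all_boot.
Set Implicit Arguments. Unset Strict Implicit. Unset Printing Implicit Defensive.

(* Base-b digits of n, least significant first (fuel = n suffices for b >= 2). *)
Fixpoint digits_aux (b fuel n : nat) : seq nat :=
  match fuel with
  | 0 => [::]
  | fuel'.+1 => if n == 0 then [::] else (n %% b) :: digits_aux b fuel' (n %/ b)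
  end.

Definition digits (b n : nat) : seq nat := digits_aux b n n.

Definition digsum (b n : nat) : nat := sumn (digits b n).

(* X^R: integer whose base-b representation is that of X reversed.
   Reading the LSD-first digit list as an MSD-first numeral gives the
   reversal; leading zeros are dropped automatically. *)
Definition rev_b (b x : nat) : nat := foldl (fun acc d => acc * b + d) 0 (digits b x).

Definition wMRH (b N : nat) : Prop :=
  0 < N /\ exists A : nat, N = (A + digsum b N) * rev_b b (A + digsum b N).

Lemma rev_b_test : rev_b 10 120 = 21 /\ digsum 10 987 = 24.
Proof. split; by vm_compute. Qed.

From mathcomp Require Import all_boot.
From mathcomp Require Import zify.

(* Write R = N^R and, for a large exponent k, X = N * b^k.  Appending
   zeros to a base-b numeral changes neither its digit sum nor its reversal,
   so X^R = R, and with M = b^k * R we get N * M = X * R = (N * R) * b^k,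
   whose digit sum S = s_b(N * R) does not depend on k.  Choosing k > S makes
   A = X - S nonnegative, and then A + s_b(N * M) = X, so that
   N * M = X * X^R: this is exactly the wMRH condition. *)

Section BaseB.

Variable b : nat.
Hypothesis hb : 1 < b.

Lemma divb_lt n : 0 < n -> n %/ b < n.
Proof. by move=> n0; rewrite ltn_Pdiv. Qed.

Lemma digits_aux_fuel f1 f2 n :
  n <= f1 -> n <= f2 -> digits_aux b f1 n = digits_aux b f2 n.
Proof.
elim: f1 f2 n => [|f1 IH] [|f2] n /=.
- by [].
- by rewrite leqn0 => /eqP ->.
- by move=> _; rewrite leqn0 => /eqP ->.
- case: eqP => // /eqP n0 h1 h2.
  have lt : n %/ b < n by apply: divb_lt; rewrite lt0n.
  by congr (_ :: _); apply: IH; lia.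
Qed.

Lemma digits_rec n : 0 < n -> digits b n = n %% b :: digits b (n %/ b).
Proof.
move=> n0; rewrite /digits; have lt := divb_lt n n0.
case: n n0 lt => [//|m] _ lt /=.
by congr (_ :: _); apply: digits_aux_fuel; lia.
Qed.

Lemma digits_mulb x : 0 < x -> digits b (x * b) = 0 :: digits b x.
Proof.
move=> x0; rewrite digits_rec ?modnMl ?mulnK //; [lia | nia].
Qed.

Lemma digsum_mulbX x k : 0 < x -> digsum b (x * b ^ k) = digsum b x.
Proof.
move=> x0; elim: k => [|k IH]; first by rewrite muln1.
have xbk0 : 0 < x * b ^ k by rewrite muln_gt0 x0 expn_gt0; lia.
by rewrite expnSr mulnA /digsum digits_mulb.
Qed.

Lemma rev_b_mulbX x k : 0 < x -> rev_b b (x * b ^ k) = rev_b b x.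
Proof.
move=> x0; elim: k => [|k IH]; first by rewrite muln1.
have xbk0 : 0 < x * b ^ k by rewrite muln_gt0 x0 expn_gt0; lia.
by rewrite expnSr mulnA /rev_b digits_mulb.
Qed.

Lemma horner_mono s a c : a <= c ->
  foldl (fun acc d => acc * b + d) a s <= foldl (fun acc d => acc * b + d) c s.
Proof.
elim: s a c => [|d s IH] a c h //=.
by apply: IH; rewrite leq_add2r leq_mul2r h orbT.
Qed.

(* The reversal of a positive number is positive: its leading digit,
   which becomes the trailing one, is nonzero. *)
Lemma rev_b_gt0 n : 0 < n -> 0 < rev_b b n.
Proof.
elim/ltn_ind: n => n IH n0; rewrite /rev_b digits_rec //=.
have [q0 | q0] := posnP (n %/ b).
- have n_small : n < b by rewrite ltnNge -divn_gt0 ?q0 //; lia.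
  by rewrite q0 modn_small.
- apply: leq_trans (IH _ (divb_lt n n0) q0) _.
  exact: horner_mono.
Qed.

End BaseB.

Theorem corollary15 (b : nat) (hb : 2 <= b) (N : nat) (hN : 0 < N) :
  forall K : nat, exists M : nat, K < M /\ wMRH b (N * M).
Proof.
move=> K.
set R := rev_b b N; have R0 : 0 < R by exact: rev_b_gt0.
set S := digsum b (N * R).
(* The exponent k exceeds both K (so M > K) and S (so A >= 0). *)
set k := K + S + 1; have k_lt : k < b ^ k by apply: ltn_expl.
have NR0 : 0 < N * R by rewrite muln_gt0 hN R0.
have NM_eq : N * (b ^ k * R) = N * R * b ^ k by rewrite mulnCA mulnC.
exists (b ^ k * R); split; first by nia.
split; first by rewrite NM_eq muln_gt0 NR0 expn_gt0; lia.
(* Take A = N * b^k - S, so that A + s_b(N * M) = N * b^k, whose reversal is R. *)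
exists (N * b ^ k - S).
rewrite NM_eq digsum_mulbX // -/S subnK; last by nia.
by rewrite rev_b_mulbX // -/R; nia.
Qed.
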